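(* Let $S$ be a compact, metrizable, separable space and let $A$ be the generator of a Feller semigroup on $C(S)$ with resolvent $R_\lambda=(\lambda-A)^{-1}$, $\lambda>0$. Suppose $A$ is not conservative, i.e. $\lambda R_\lambda 1_S\neq 1_S$ for some $\lambda>0$. Then there exists at least one Laplace transform of an exit law for $A$.
   Context: A Feller semigroup is a strongly continuous semigroup of positive contractions on $C(S)$ (real continuous functions, sup norm) with $T(0)=I$, not necessarily conservative; it is conservative iff $\lambda R_\lambda1_S=1_S$ for all $\lambda>0$. A family $\ell_\lambda$, $\lambda>0$, is the Laplace transform of an exit law for $A$ if: (a) $(0,\infty)\ni\lambda\mapsto\ell_\lambda\in C(S)$ is locally bounded, non-negative and $\ell_\lambda\neq0$ for at least one $\lambda$; (b) $\lim_{\lambda\to0+}\ell_\lambda(x)\le1$ for each $x\in S$; (c) $(\lambda-\mu)R_\lambda\ell_\mu=\ell_\mu-\ell_\lambda$ for all $\lambda,\mu>0$. *)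

From HB Require Import structures.
From mathcomp Require Import all_boot all_order all_algebra.
From mathcomp Require Import all_classical all_reals all_analysis.
Set Implicit Arguments. Unset Strict Implicit. Unset Printing Implicit Defensive.
Import Order.TTheory GRing.Theory Num.Theory.
Import numFieldNormedType.Exports.
Local Open Scope classical_set_scope.
Local Open Scope ring_scope.

(* Real-valued functions on S; C(S) = those that are continuous. *)

Definition supn {R : realType} {S : topologicalType} (f : S -> R) : R :=
  sup [set `|f x| | x in [set: S]].

Definition separable_space (S : topologicalType) : Prop :=
  exists D : set S, countable D /\ dense D.

Definition feller_semigroup {R : realType} {S : topologicalType}
  (T : R -> (S -> R) -> (S -> R)) : Prop :=
  (forall t (f : S -> R), 0 <= t -> continuous f -> continuous (T t f)) /\
      (forall t (a : R) (f g : S -> R), 0 <= t -> continuous f -> continuous g ->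
          T t (fun x => a * f x + g x) = (fun x => a * T t f x + T t g x)) /\
      (forall t (f : S -> R), 0 <= t -> continuous f -> (forall x, 0 <= f x) ->
          forall x, 0 <= T t f x) /\
      (forall t (f : S -> R), 0 <= t -> continuous f -> supn (T t f) <= supn f) /\
      (forall f : S -> R, continuous f -> T 0 f = f) /\
      (forall s t (f : S -> R), 0 <= s -> 0 <= t -> continuous f ->
          T (s + t) f = T s (T t f)) /\
      (forall f : S -> R, continuous f ->
          (fun t => supn (fun x => T t f x - f x)) @ 0^'+ --> 0).

Definition is_generator {R : realType} {S : topologicalType}
  (T : R -> (S -> R) -> (S -> R)) (D : set (S -> R))
  (A : (S -> R) -> (S -> R)) : Prop :=
  (forall f, D f <-> (continuous f /\ exists g : S -> R, continuous g /\
      (fun t => supn (fun x => (T t f x - f x) / t - g x)) @ 0^'+ --> 0)) /\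
  (forall f, D f -> continuous (A f) /\
      (fun t => supn (fun x => (T t f x - f x) / t - A f x)) @ 0^'+ --> 0).

Definition is_resolvent {R : realType} {S : topologicalType}
  (D : set (S -> R)) (A : (S -> R) -> (S -> R))
  (Res : R -> (S -> R) -> (S -> R)) : Prop :=
  forall l, 0 < l ->
    (forall g, continuous g ->
       D (Res l g) /\ (fun x => l * Res l g x - A (Res l g) x) = g) /\
    (forall f, D f -> Res l (fun x => l * f x - A f x) = f).

Definition exit_law_LT {R : realType} {S : topologicalType}
  (Res : R -> (S -> R) -> (S -> R)) (ell : R -> S -> R) : Prop :=
  (forall l, 0 < l -> continuous (ell l)) /\
      (forall a b, 0 < a -> a <= b -> exists M : R,
          forall l x, a <= l <= b -> `|ell l x| <= M) /\
      (forall l x, 0 < l -> 0 <= ell l x) /\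
      (exists l, 0 < l /\ ell l <> (fun _ => 0)) /\
      (forall x, cvg ((fun l => ell l x) @ 0^'+) /\
                 lim ((fun l => ell l x) @ 0^'+) <= 1) /\
      (forall l m, 0 < l -> 0 < m ->
          (fun x => (l - m) * Res l (ell m) x) = (fun x => ell m x - ell l x)).

From HB Require Import structures.
From mathcomp Require Import all_boot all_order all_algebra.
From mathcomp Require Import all_classical all_reals all_analysis.
From mathcomp Require Import ring lra.
Import Order.TTheory GRing.Theory Num.Theory.
Import numFieldNormedType.Exports.
Local Open Scope classical_set_scope.
Local Open Scope ring_scope.
Set Implicit Arguments. Unset Strict Implicit.

(* The candidate is [ell l = 1 - l R_l 1].  Since the [T t] are positive
   contractions, the generator satisfies the positive maximum principle, so
   [R_l] is positive and [l R_l 1 <= 1]: hence [0 <= ell l <= 1].  The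
   resolvent equation [(l - m) R_l (ell m) = ell m - ell l] follows from
   [(l - A) R_l 1 = 1], and together with positivity of [R_l] it makes
   [l |-> ell l x] nonincreasing, so its limit at [0+] exists and is at most
   [1].  Non-conservativity says exactly that some [ell l] is nonzero. *)

Lemma continuous_lincomb (R : realType) (S : topologicalType) (a b : R)
    (f g : S -> R) :
  continuous f -> continuous g -> continuous (fun x => a * f x + b * g x).
Proof.
by move=> cf cg x; apply: cvgD; apply: cvgMl_tmp; [exact: cf|exact: cg].
Qed.

Section CompactSpace.
Variables (R : realType) (S : topologicalType).
Hypothesis compactS : compact [set: S].

Lemma cst1_continuous : continuous (fun _ : S => (1 : R)).
Proof. exact: cst_continuous. Qed.

Lemma ler_supn (f : S -> R) x : continuous f -> `|f x| <= supn f.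
Proof.
move=> cf; apply: sup_upper_bound; last by exists x.
apply: compact_has_sup; first by exists `|f x|, x.
apply: (@continuous_compact _ _ (fun y => `|f y|)) => //.
apply: continuous_subspaceT => y.
exact: (continuous_comp (cf y) (@norm_continuous _ R^o _)).
Qed.

Lemma supn_le (f : S -> R) (M : R) :
  0 <= M -> (forall x, `|f x| <= M) -> supn f <= M.
Proof.
move=> M0 fM; rewrite /supn.
have [->|/set0P ne] := eqVneq [set `|f x| | x in [set: S]] set0.
  by rewrite sup0.
by apply: ge_sup => // _ [y _ <-].
Qed.

Lemma supn_ge0 (f : S -> R) : continuous f -> 0 <= supn f.
Proof.
move=> cf; rewrite /supn.
have [->|/set0P [_ [x _ _]]] := eqVneq [set `|f x| | x in [set: S]] set0.
  by rewrite sup0.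
exact: le_trans (normr_ge0 _) (ler_supn x cf).
Qed.

Lemma supn_lincomb_le (a b : R) (f g : S -> R) :
  continuous f -> continuous g ->
  supn (fun x => a * f x + b * g x) <= `|a| * supn f + `|b| * supn g.
Proof.
move=> cf cg; apply: supn_le => [|x].
  by rewrite addr_ge0 // mulr_ge0 // supn_ge0.
rewrite (le_trans (ler_normD _ _)) // !normrM.
by rewrite lerD // ler_wpM2l // ler_supn.
Qed.

Lemma cvg_supn0_pointwise (F : R -> S -> R) :
  (\forall t \near 0^'+, continuous (F t)) ->
  (fun t => supn (F t)) @ 0^'+ --> 0 ->
  forall x, (fun t => F t x) @ 0^'+ --> 0.
Proof.
move=> cF F0 x; apply/cvgr0Pnorm_le => e e0.
near=> t; apply: le_trans (ler_supn x _) (le_trans (ler_norm _) _).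
- by near: t.
- by near: t; exact: cvgr0_norm_le F0 _ e0.
Unshelve. all: by end_near.
Qed.

Section FellerSemigroup.
Variable T : R -> (S -> R) -> (S -> R).
Hypothesis fellerT : feller_semigroup T.

Lemma feller0 t : 0 <= t -> T t (fun _ => 0) = (fun _ => 0).
Proof.
move=> t0; have [_ [linT _]] := fellerT.
have := linT t 1 _ _ t0 (@cst_continuous _ _ 0) (@cst_continuous _ _ 0).
rewrite (_ : (fun _ => 1 * 0 + 0) = fun _ => 0); last first.
  by apply: funext => x; rewrite mul1r addr0.
move=> E; apply: funext => x; have := congr1 (fun h => h x) E => /=; lra.
Qed.

Lemma fellerZ t (a : R) (f : S -> R) : 0 <= t -> continuous f ->
  T t (fun x => a * f x) = (fun x => a * T t f x).
Proof.
move=> t0 cf; have [_ [linT _]] := fellerT.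
have := linT t a f _ t0 cf (@cst_continuous _ _ 0).
rewrite (_ : (fun x => a * f x + 0) = fun x => a * f x); last first.
  by apply: funext => x; rewrite addr0.
by rewrite feller0 // => ->; apply: funext => x; rewrite addr0.
Qed.

Lemma feller1_le1 t x : 0 <= t -> T t (fun _ => 1) x <= 1.
Proof.
move=> t0; have [contT [_ [_ [contrT _]]]] := fellerT.
have c1 := cst1_continuous.
apply: le_trans (ler_norm _) (le_trans (ler_supn x (contT _ _ t0 c1)) _).
apply: le_trans (contrT _ _ t0 c1) _.
by apply: supn_le => // y; rewrite normr1.
Qed.

(* Positivity of [T t] applied to [f x1 - f >= 0], then [T t 1 <= 1]. *)
Lemma feller_le_max t (f : S -> R) x1 : 0 <= t -> continuous f ->
  (forall y, f y <= f x1) -> 0 <= f x1 -> T t f x1 <= f x1.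
Proof.
move=> t0 cf fmax fx1_ge0; have [_ [linT [posT _]]] := fellerT.
have g_ge0 y : 0 <= -1 * f y + f x1 * 1 by have := fmax y; lra.
have cg := continuous_lincomb (a := -1) (b := f x1) cf cst1_continuous.
have := posT t _ t0 cg g_ge0 x1.
have cfx1 : continuous (fun _ : S => f x1 * 1) by exact: cst_continuous.
rewrite (linT t (-1) f (fun _ => f x1 * 1) t0 cf cfx1).
rewrite fellerZ //=; last exact: cst1_continuous.
have := feller1_le1 x1 t0; nra.
Qed.

Lemma continuous_quotient_error t (f g : S -> R) :
  0 < t -> continuous f -> continuous g ->
  continuous (fun x => (T t f x - f x) / t - g x).
Proof.
move=> t0 cf cg x; have [contT _] := fellerT.
apply: cvgB; last exact: cg.
apply: cvgMr_tmp; apply: cvgB; last exact: cf.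
exact: contT (ltW t0) cf x.
Qed.

Lemma feller_quotient_cvg (f g : S -> R) : continuous f -> continuous g ->
  (fun t => supn (fun x => (T t f x - f x) / t - g x)) @ 0^'+ --> 0 ->
  forall x, (fun t => (T t f x - f x) / t) @ 0^'+ --> g x.
Proof.
move=> cf cg fg x; apply/subr_cvg0; apply: cvg_supn0_pointwise fg x.
near=> t; apply: continuous_quotient_error cf cg.
by near: t; exact: nbhs_right_gt.
Unshelve. all: by end_near.
Qed.

Lemma feller_quotient_lincomb (a b : R) (f g u v : S -> R) :
  continuous f -> continuous g -> continuous u -> continuous v ->
  (fun t => supn (fun x => (T t f x - f x) / t - u x)) @ 0^'+ --> 0 ->
  (fun t => supn (fun x => (T t g x - g x) / t - v x)) @ 0^'+ --> 0 ->
  (fun t => supn (fun x =>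
     (T t (fun y => a * f y + b * g y) x - (a * f x + b * g x)) / t
     - (a * u x + b * v x))) @ 0^'+ --> 0.
Proof.
move=> cf cg cu cv fu gv; have [_ [linT _]] := fellerT.
pose Ef t := supn (fun x => (T t f x - f x) / t - u x).
pose Eg t := supn (fun x => (T t g x - g x) / t - v x).
have bound_cvg0 : (fun t => `|a| * Ef t + `|b| * Eg t) @ 0^'+ --> 0.
  have := cvgD (cvgMl_tmp (a := `|a|) fu) (cvgMl_tmp (a := `|b|) gv).
  by rewrite !mulr0 addr0 => lim0; exact: lim0.
apply: (squeeze_cvgr _ (cvg_cst 0) bound_cvg0).
near=> t; have t0 : 0 < t by near: t; exact: nbhs_right_gt.
have cgb : continuous (fun y => b * g y).
  by move=> y; apply: cvgMl_tmp; exact: cg.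
have t_ge0 := ltW t0.
rewrite (linT t a f (fun y => b * g y)) ?fellerZ //.
set F := (fun x => (T t f x - f x) / t - u x).
set G := (fun x => (T t g x - g x) / t - v x).
have -> : (fun x => (a * T t f x + b * T t g x - (a * f x + b * g x)) / t
                    - (a * u x + b * v x)) = (fun x => a * F x + b * G x).
  by apply: funext => x; rewrite /F /G; field; rewrite gt_eqF.
have cF := continuous_quotient_error t0 cf cu.
have cG := continuous_quotient_error t0 cg cv.
apply/andP; split; last exact: supn_lincomb_le.
exact/supn_ge0/continuous_lincomb.
Unshelve. all: by end_near.
Qed.

Section Generator.
Variables (D : set (S -> R)) (A : (S -> R) -> (S -> R)).
Hypothesis genA : is_generator T D A.

Lemma generator_dom_continuous f : D f -> continuous f.
Proof. by move=> /genA.1 []. Qed.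

Lemma generator_cvg f : D f ->
  forall x, (fun t => (T t f x - f x) / t) @ 0^'+ --> A f x.
Proof.
move=> Df; have [cAf Af] := genA.2 f Df.
exact: feller_quotient_cvg (generator_dom_continuous Df) cAf Af.
Qed.

Lemma generator_unique f (g : S -> R) : D f -> continuous g ->
  (fun t => supn (fun x => (T t f x - f x) / t - g x)) @ 0^'+ --> 0 -> A f = g.
Proof.
move=> Df cg fg; apply: funext => x.
rewrite -(cvg_lim _ (generator_cvg (x := x) Df)) //.
have cf := generator_dom_continuous Df.
exact: cvg_lim (feller_quotient_cvg (x := x) cf cg fg).
Qed.

Lemma generator_lincomb (a b : R) f g : D f -> D g ->
  D (fun x => a * f x + b * g x) /\
  A (fun x => a * f x + b * g x) = (fun x => a * A f x + b * A g x).
Proof.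
move=> Df Dg; have [cAf Af] := genA.2 f Df; have [cAg Ag] := genA.2 g Dg.
have [cf cg] := (generator_dom_continuous Df, generator_dom_continuous Dg).
have cAfg := continuous_lincomb (a := a) (b := b) cAf cAg.
have Afg := feller_quotient_lincomb a b cf cg cAf cAg Af Ag.
have Dfg : D (fun x => a * f x + b * g x).
  apply/genA.1; split; first exact: continuous_lincomb.
  by exists (fun x => a * A f x + b * A g x).
by split=> //; exact: generator_unique.
Qed.

Lemma generator_max_le0 f x1 : D f ->
  (forall y, f y <= f x1) -> 0 <= f x1 -> A f x1 <= 0.
Proof.
move=> Df fmax fx1_ge0; have Afx1 := generator_cvg (x := x1) Df.
rewrite -(cvg_lim _ Afx1) //; apply: limr_le; first exact: cvgP Afx1.
near=> t; have t0 : 0 < t by near: t; exact: nbhs_right_gt.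
apply: mulr_le0_ge0; last by rewrite invr_ge0 ltW.
rewrite subr_le0.
exact: feller_le_max (ltW t0) (generator_dom_continuous Df) fmax fx1_ge0.
Unshelve. all: by end_near.
Qed.

Lemma generator_min_ge0 f x1 : D f ->
  (forall y, f x1 <= f y) -> f x1 <= 0 -> 0 <= A f x1.
Proof.
move=> Df fmin fx1_le0; have [Dg Ag] := generator_lincomb (-1) 0 Df Df.
have gmax y : -1 * f y + 0 * f y <= -1 * f x1 + 0 * f x1 by have := fmin y; lra.
have g_ge0 : 0 <= -1 * f x1 + 0 * f x1 by lra.
by have := generator_max_le0 Dg gmax g_ge0; rewrite Ag /=; lra.
Qed.

Section Resolvent.
Variable Res : R -> (S -> R) -> (S -> R).
Hypothesis resR : is_resolvent D A Res.

Lemma resolvent_ge0 (l : R) (g : S -> R) :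
  0 < l -> continuous g -> (forall x, 0 <= g x) -> forall x, 0 <= Res l g x.
Proof.
move=> l0 cg g_ge0 x; have [DRg ARg] := (resR l0).1 g cg.
have [c _ cmin] := compact_EVT_min (ex_intro _ x I) compactS
  (continuous_subspaceT (generator_dom_continuous DRg)).
have {}cmin y : Res l g c <= Res l g y by apply: cmin; rewrite inE.
apply: le_trans (cmin x); rewrite leNgt; apply/negP => Rgc_lt0.
have := generator_min_ge0 DRg cmin (ltW Rgc_lt0).
by have := congr1 (fun h => h c) ARg; have := g_ge0 c; rewrite /=; nra.
Qed.

Lemma resolvent1_le1 (l : R) x : 0 < l -> l * Res l (fun _ => 1) x <= 1.
Proof.
move=> l0; have c1 := cst1_continuous.
have [DR1 AR1] := (resR l0).1 _ c1.
have [c _ cmax] := compact_EVT_max (ex_intro _ x I) compactS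
  (continuous_subspaceT (generator_dom_continuous DR1)).
have {}cmax y : Res l (fun _ => 1) y <= Res l (fun _ => 1) c.
  by apply: cmax; rewrite inE.
have := generator_max_le0 DR1 cmax (resolvent_ge0 l0 c1 (fun _ => ler01) c).
by have := congr1 (fun h => h c) AR1; have := cmax x; rewrite /=; nra.
Qed.

Definition exit_ell (l : R) (x : S) : R := 1 - l * Res l (fun _ => 1) x.

Lemma exit_ell_ge0 l x : 0 < l -> 0 <= exit_ell l x.
Proof. by move=> l0; rewrite subr_ge0 resolvent1_le1. Qed.

Lemma exit_ell_le1 l x : 0 < l -> exit_ell l x <= 1.
Proof.
move=> l0; rewrite /exit_ell gerBl; apply: mulr_ge0 (ltW l0) _.
exact: resolvent_ge0 l0 cst1_continuous (fun _ => ler01) x.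
Qed.

Lemma exit_ell_continuous l : 0 < l -> continuous (exit_ell l).
Proof.
move=> l0 x; have [DR1 _] := (resR l0).1 _ cst1_continuous.
apply: cvgB; first exact: cvg_cst.
by apply: cvgMl_tmp; exact: generator_dom_continuous DR1 x.
Qed.

(* [R_l (ell m) = (l R_l 1 - m R_m 1) / (l - m)]: apply [l - A] to the
   right-hand side and use [(l - A) R_l 1 = 1]. *)
Lemma exit_ell_resolvent l m : 0 < l -> 0 < m ->
  (fun x => (l - m) * Res l (exit_ell m) x) =
  (fun x => exit_ell m x - exit_ell l x).
Proof.
move=> l0 m0; have [<-|ml] := eqVneq m l.
  by apply: funext => x; rewrite !subrr mul0r.
have lm : l - m != 0 by rewrite subr_eq0 eq_sym.
have c1 := cst1_continuous.
have [Dv Av] := (resR l0).1 _ c1; have [Du Au] := (resR m0).1 _ c1.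
set v := Res l (fun _ => 1) in Dv Av *; set u := Res m (fun _ => 1) in Du Au *.
have [Dw Aw] := generator_lincomb (l / (l - m)) (- (m / (l - m))) Dv Du.
set w := (fun x => _) in Dw Aw.
have Avx x : A v x = l * v x - 1 by have := congr1 (fun h => h x) Av => /=; lra.
have Aux x : A u x = m * u x - 1 by have := congr1 (fun h => h x) Au => /=; lra.
have ell_m : exit_ell m = fun x => l * w x - A w x.
  by apply: funext => x; rewrite Aw /exit_ell -/u /w Avx Aux; field.
have -> : Res l (exit_ell m) = w by rewrite ell_m; exact: (resR l0).2.
by apply: funext => x; rewrite /exit_ell -/u -/v /w; field.
Qed.

Lemma exit_ell_nonincreasing p q x :
  0 < p -> p <= q -> exit_ell q x <= exit_ell p x.
Proof.
move=> p0 pq; have q0 := lt_le_trans p0 pq.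
have qp_ge0 : 0 <= q - p by rewrite subr_ge0.
have := congr1 (fun h => h x) (exit_ell_resolvent q0 p0) => /= E.
have := mulr_ge0 qp_ge0
  (resolvent_ge0 q0 (exit_ell_continuous p0) (fun y => exit_ell_ge0 y p0) x).
by rewrite E subr_ge0.
Qed.

Lemma exit_ell_cvg x : cvg ((fun l => exit_ell l x) @ 0^'+) /\
  lim ((fun l => exit_ell l x) @ 0^'+) <= 1.
Proof.
have ell_cvg : cvg ((fun l => exit_ell l x) @ 0^'+).
  apply: nonincreasing_at_right_is_cvgr.
    near=> b => p q; rewrite !in_itv /= => /andP[p0 _] /andP[q0 _].
    exact: exit_ell_nonincreasing.
  near=> b; exists 1 => _ [l + <-]; rewrite /= in_itv /= => /andP[l0 _].
  exact: exit_ell_le1.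
split=> //; apply: limr_le => //.
near=> l; apply: exit_ell_le1; near: l; exact: nbhs_right_gt.
Unshelve. all: by end_near.
Qed.

End Resolvent.

End Generator.

End FellerSemigroup.

End CompactSpace.

Theorem theorem4 (R : realType) (S : pseudoMetricType R)
  (T : R -> (S -> R) -> (S -> R)) (D : set (S -> R))
  (A : (S -> R) -> (S -> R)) (Res : R -> (S -> R) -> (S -> R)) :
  hausdorff_space S -> compact [set: S] -> separable_space S ->
  feller_semigroup T -> is_generator T D A -> is_resolvent D A Res ->
  (exists l, 0 < l /\ (fun x => l * Res l (fun _ => 1) x) <> (fun _ => 1)) ->
  exists ell : R -> S -> R, exit_law_LT Res ell.
Proof.
move=> _ compactS _ fellerT genA resR [l1 [l1_gt0 nonconservative]].
have ell_ge0 := exit_ell_ge0 compactS fellerT genA resR.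
have ell_le1 := exit_ell_le1 compactS fellerT genA resR.
exists (exit_ell Res); split.
  by move=> l l_gt0; exact: (exit_ell_continuous genA resR l_gt0).
split.
  move=> a b a_gt0 _; exists 1 => l x /andP[al _].
  have l_gt0 := lt_le_trans a_gt0 al.
  by rewrite ger0_norm ?ell_ge0 ?ell_le1.
split; first by move=> l x; exact: ell_ge0.
split.
  exists l1; split=> // ell0; apply: nonconservative; apply: funext => x.
  by have := congr1 (fun h => h x) ell0; rewrite /exit_ell /=; lra.
split=> [x|l m l_gt0 m_gt0].
  exact (exit_ell_cvg compactS fellerT genA resR x).
exact (exit_ell_resolvent compactS fellerT genA resR l_gt0 m_gt0).
Qed.
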